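(* For every complex $s$ with $\Re(s)>4$, \[\sum_{k=1}^\infty k^2\,\zeta(s,2k)=\tfrac{1}{24}\Big\{(3\cdot 2^{1-s}-1) \zeta(s-1)+6\cdot 2^{1-s} \zeta(s-2)+\zeta(s-3)\Big\}.\]
   Context: $\zeta(s,\alpha)=\sum_{n=0}^\infty (n+\alpha)^{-s}$ denotes the Hurwitz zeta function ($\Re(s)>1$, $\alpha>0$), and $\zeta(s)=\zeta(s,1)$ is the Riemann zeta function. *)

From Stdlib Require Import Reals.
From Coquelicot Require Import Coquelicot.

(* Principal complex power x^z for a real base x > 0:
   x^z = exp(z ln x) = e^{Re z ln x} (cos (Im z ln x) + i sin (Im z ln x)). *)
Definition cpow (x : R) (z : C) : C :=
  (exp (Re z * ln x) * cos (Im z * ln x), exp (Re z * ln x) * sin (Im z * ln x))%R.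

(* Hurwitz zeta  zeta(s,a) = sum_{n>=0} (n+a)^{-s}  (meaningful for Re s > 1, a > 0),
   taken componentwise as a series of complex numbers. *)
Definition hurwitz_zeta (s : C) (a : R) : C :=
  (Series (fun n => Re (cpow (INR n + a) (- s))),
   Series (fun n => Im (cpow (INR n + a) (- s)))).

Definition riemann_zeta (s : C) : C := hurwitz_zeta s 1.

From Stdlib Require Import Reals Lra Lia.
From Coquelicot Require Import Coquelicot.

(* Write a_n = (n+1)^(-s), so that zeta(s,2k) = sum_{n>=2k-1} a_n is a tail
   T_(2k-1) of the series of zeta(s).  Summation by parts regroups the partial
   sum over k <= K+1 by the index n of a_n: each a_n with n <= 2K+2 receives the
   weight sum_{k <= (n+1)/2} k^2 = ((n+1)^3 - (n+1))/24 (+ (3(n+1)^2+3(n+1))/24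
   when n+1 is even), and what remains is the boundary term
   (1^2+...+(K+1)^2) T_(2K+3).  The regrouped sums are combinations of
   zeta(s-1), zeta(s-2), zeta(s-3), and the boundary term is O(K^3) times a tail
   of sum (n+1)^(-Re s), hence bounded by a tail of the convergent series
   sum (n+1)^(-(Re s - 3)), which tends to 0 because Re s - 3 > 1. *)

Lemma sum_n_components (a : nat -> C) n :
  sum_n a n = (sum_n (fun k => Re (a k)) n, sum_n (fun k => Im (a k)) n).
Proof.
  induction n as [|n IH]; [rewrite !sum_O; now destruct (a O)|].
  rewrite !sum_Sn, IH. reflexivity.
Qed.

Lemma is_series_C (a : nat -> C) l :
  is_series a l <->
  is_series (fun n => Re (a n)) (Re l) /\ is_series (fun n => Im (a n)) (Im l).
Proof.
  unfold is_series.
  rewrite (@filterlim_locally nat (NormedModule.UniformSpace _ C_NormedModule)),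
    !(@filterlim_locally nat R_UniformSpace); [| exact _ ..].
  split.
  - intros H; split; intros eps; generalize (H eps); apply filter_imp;
      intros n; rewrite sum_n_components; intros [H1 H2]; assumption.
  - intros [H1 H2] eps. generalize (filter_and _ _ (H1 eps) (H2 eps)).
    apply filter_imp. intros n Hn. rewrite sum_n_components. exact Hn.
Qed.

(* The sum of a complex series, taken componentwise: the same shape as the
   definition of [hurwitz_zeta]. *)
Definition CSeries (a : nat -> C) : C :=
  (Series (fun n => Re (a n)), Series (fun n => Im (a n))).

Lemma CSeries_unique (a : nat -> C) l : is_series a l -> CSeries a = l.
Proof.
  intros [H1 H2]%is_series_C. unfold CSeries.
  rewrite (is_series_unique _ _ H1), (is_series_unique _ _ H2). now destruct l.
Qed.

Lemma CSeries_correct (a : nat -> C) : ex_series a -> is_series a (CSeries a).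
Proof. intros [l H]. now rewrite (CSeries_unique a l H). Qed.

Lemma Cmod_le_Re_Im (z : C) : Cmod z <= Rabs (Re z) + Rabs (Im z).
Proof.
  destruct z as [x y]. unfold Cmod, Re, Im; cbn [fst snd].
  pose proof (Rabs_pos x); pose proof (Rabs_pos y).
  rewrite <- (sqrt_pow2 (Rabs x + Rabs y)) by lra.
  apply sqrt_le_1_alt. rewrite <- (pow2_abs x), <- (pow2_abs y). nra.
Qed.

Lemma im_le_Cmod (z : C) : Rabs (Im z) <= Cmod z.
Proof.
  destruct z as [x y]. unfold Cmod, Re, Im; cbn [fst snd].
  rewrite <- (sqrt_pow2 (Rabs y)) by apply Rabs_pos.
  apply sqrt_le_1_alt. rewrite pow2_abs. nra.
Qed.

(* A crude triangle inequality for [CSeries], enough to show that tails vanish. *)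
Lemma Cmod_CSeries (a : nat -> C) :
  ex_series (fun n => Cmod (a n)) -> Cmod (CSeries a) <= 2 * Series (fun n => Cmod (a n)).
Proof.
  intros H.
  assert (Hcomp : forall f : C -> R, (forall z, Rabs (f z) <= Cmod z) ->
            ex_series (fun n => Rabs (f (a n))) /\
            Series (fun n => Rabs (f (a n))) <= Series (fun n => Cmod (a n))).
  { intros f Hf. split.
    - apply (ex_series_le (V:=R_CompleteNormedModule) _ (fun n => Cmod (a n))); [|exact H].
      intros n. change (Rabs (Rabs (f (a n))) <= Cmod (a n)). now rewrite Rabs_Rabsolu.
    - apply Series_le; [|exact H]. intros n. split; [apply Rabs_pos|apply Hf]. }
  destruct (Hcomp Re re_le_Cmod) as [HRe BRe].
  destruct (Hcomp Im im_le_Cmod) as [HIm BIm].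
  eapply Rle_trans; [apply Cmod_le_Re_Im|]. unfold CSeries; simpl.
  pose proof (Series_Rabs _ HRe). pose proof (Series_Rabs _ HIm). lra.
Qed.

Definition ctail (a : nat -> C) (j : nat) : C := CSeries (fun k => a (j + k)%nat).

Lemma ctail_is_series (a : nat -> C) j :
  ex_series a -> is_series (fun k => a (j + k)%nat) (ctail a j).
Proof. intros H. apply CSeries_correct, (ex_series_incr_n a j), H. Qed.

Lemma ctail_step (a : nat -> C) j : ex_series a -> ctail a j = (a j + ctail a (S j))%C.
Proof.
  intros H.
  assert (Hshift : is_series (fun k => a (S j + k)%nat) (ctail a j - a j)%C).
  { apply (is_series_ext (fun k => a (j + S k)%nat)).
    { intros k. now rewrite Nat.add_succ_r. }
    apply (is_series_incr_1 (fun k => a (j + k)%nat)).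
    rewrite Nat.add_0_r. change (is_series (fun k => a (j + k)%nat) (ctail a j - a j + a j)%C).
    replace (ctail a j - a j + a j)%C with (ctail a j) by ring.
    now apply ctail_is_series. }
  unfold ctail at 2. rewrite (CSeries_unique _ _ Hshift). ring.
Qed.

Definition pterm (p : R) (n : nat) : R := exp (- p * ln (INR n + 1)).

Lemma pterm_pos p n : 0 < pterm p n.
Proof. apply exp_pos. Qed.

(* [ln (x+1) - ln x >= 1/(x+1)], from [exp t >= 1 + t] at [t = ln (x/(x+1))]. *)
Lemma ln_succ_gap x : 0 < x -> / (x + 1) <= ln (x + 1) - ln x.
Proof.
  intros Hx.
  assert (H := exp_ineq1_le (ln (x / (x + 1)))).
  rewrite exp_ln, ln_div in H by (try apply Rdiv_lt_0_compat; lra).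
  assert (x / (x + 1) = 1 - / (x + 1)) by (field; lra).
  lra.
Qed.

(* Integral comparison in discrete form: [(x+1)^(-q-1) <= (x^(-q) - (x+1)^(-q)) / q]. *)
Lemma power_difference_bound q x : 0 < q -> 0 < x ->
  exp (- (q + 1) * ln (x + 1)) <= (exp (- q * ln x) - exp (- q * ln (x + 1))) / q.
Proof.
  intros Hq Hx.
  set (L1 := ln x). set (L2 := ln (x + 1)).
  assert (Hgap : q * / (x + 1) <= q * (L2 - L1)).
  { apply Rmult_le_compat_l; [lra|]. now apply ln_succ_gap. }
  assert (E1 : exp (- (q + 1) * L2) = exp (- q * L2) * / (x + 1)).
  { replace (- (q + 1) * L2) with (- q * L2 + - L2) by ring.
    rewrite exp_plus, exp_Ropp. unfold L2. now rewrite exp_ln by lra. }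
  assert (E2 : exp (- q * L1) = exp (- q * L2) * exp (q * (L2 - L1))).
  { rewrite <- exp_plus. f_equal. ring. }
  assert (Hexp := exp_ineq1_le (q * (L2 - L1))).
  assert (P := exp_pos (- q * L2)).
  rewrite E1, E2. apply Rmult_le_reg_l with q; [lra|].
  set (A := exp (- q * L2) * exp (q * (L2 - L1)) - exp (- q * L2)).
  replace (q * (A / q)) with A by (field; lra). unfold A.
  nra.
Qed.

(* Telescoping [power_difference_bound] gives a uniform bound on the partial sums. *)
Lemma pterm_partial_sum p n : 1 < p ->
  sum_n (pterm p) n <= 1 + (1 - exp (- (p - 1) * ln (INR n + 1))) / (p - 1).
Proof.
  intros Hp. induction n as [|n IH].
  - rewrite sum_O. unfold pterm. simpl.
    rewrite Rplus_0_l, ln_1, !Rmult_0_r, exp_0. unfold Rdiv. lra.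
  - rewrite sum_Sn. change (plus ?u ?v) with (u + v).
    unfold pterm at 2. rewrite S_INR.
    pose proof (pos_INR n).
    pose proof (power_difference_bound (p - 1) (INR n + 1) ltac:(lra) ltac:(lra)) as K.
    replace (- (p - 1 + 1)) with (- p) in K by ring.
    unfold Rdiv in *. lra.
Qed.

(* Bounded increasing partial sums converge. *)
Lemma pterm_summable p : 1 < p -> ex_series (pterm p).
Proof.
  intros Hp.
  destruct (ex_finite_lim_seq_incr (sum_n (pterm p)) (1 + 1 / (p - 1))) as [l Hl].
  - intros n. rewrite sum_Sn. change (plus ?u ?v) with (u + v).
    pose proof (pterm_pos p (S n)). lra.
  - intros n. eapply Rle_trans; [now apply pterm_partial_sum|].
    pose proof (exp_pos (- (p - 1) * ln (INR n + 1))).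
    unfold Rdiv. apply Rplus_le_compat_l, Rmult_le_compat_r.
    + left; apply Rinv_0_lt_compat; lra.
    + lra.
  - now exists l.
Qed.

Lemma pterm_tail_vanishes p : 1 < p ->
  is_lim_seq (fun j => Series (fun k => pterm p (j + k))) 0.
Proof.
  intros Hp. assert (Hex := pterm_summable p Hp).
  apply is_lim_seq_incr_1.
  apply (is_lim_seq_ext (fun j => Series (pterm p) - sum_n (pterm p) j)).
  { intros j. rewrite (Series_incr_n _ (S j)), sum_n_Reals by (lia || exact Hex). simpl. ring. }
  replace (Finite 0) with (Rbar_minus (Series (pterm p)) (Series (pterm p)))
    by (simpl; f_equal; ring).
  apply is_lim_seq_minus'; [apply is_lim_seq_const|].
  exact (Series_correct _ Hex).
Qed.

Lemma cpow_mult x y z : 0 < x -> 0 < y -> cpow (x * y) z = (cpow x z * cpow y z)%C.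
Proof.
  intros Hx Hy. unfold cpow. rewrite ln_mult by assumption.
  rewrite !Rmult_plus_distr_l, exp_plus, cos_plus, sin_plus.
  unfold Cmult; cbn [fst snd]. f_equal; ring.
Qed.

Lemma cpow_add_real x z r : cpow x (z + RtoC r) = (RtoC (exp (r * ln x)) * cpow x z)%C.
Proof.
  unfold cpow. destruct z as [a b]; cbn [Re Im fst snd RtoC Cplus].
  rewrite Rplus_0_r, Rmult_plus_distr_r, exp_plus.
  unfold Cmult, RtoC; cbn [fst snd]. f_equal; ring.
Qed.

Lemma Cmod_cpow x z : Cmod (cpow x z) = exp (Re z * ln x).
Proof.
  unfold cpow, Cmod; cbn [fst snd].
  set (e := exp (Re z * ln x)). set (t := Im z * ln x).
  replace ((e * cos t) ^ 2 + (e * sin t) ^ 2) with (e ^ 2).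
  - apply sqrt_pow2. left. apply exp_pos.
  - pose proof (sin2_cos2 t) as H. unfold Rsqr in H. nra.
Qed.

Lemma cpow_2_one_minus s : cpow 2 (1 - s) = (2 * cpow 2 (- s))%C.
Proof.
  replace (1 - s)%C with (- s + RtoC 1)%C by ring.
  rewrite cpow_add_real, Rmult_1_l, exp_ln by lra. reflexivity.
Qed.

Definition zterm (s : C) (n : nat) : C := cpow (INR n + 1) (- s).

Lemma Cmod_zterm s n : Cmod (zterm s n) = pterm (Re s) n.
Proof. unfold zterm, pterm. now rewrite Cmod_cpow. Qed.

Lemma zterm_norm_summable s : 1 < Re s -> ex_series (fun n => Cmod (zterm s n)).
Proof.
  intros H. apply (ex_series_ext (pterm (Re s))); [|now apply pterm_summable].
  intros n. now rewrite Cmod_zterm.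
Qed.

Lemma zterm_summable s : 1 < Re s -> ex_series (zterm s).
Proof.
  intros H. apply (ex_series_le (V:=C_CompleteNormedModule) _ (fun n => Cmod (zterm s n)));
    [|now apply zterm_norm_summable].
  intros n. apply Rle_refl.
Qed.

Lemma riemann_zeta_series s : 1 < Re s -> is_series (zterm s) (riemann_zeta s).
Proof. intros H. now apply CSeries_correct, zterm_summable. Qed.

Lemma zterm_shift s (k : nat) n :
  zterm (s - RtoC (INR k)) n = (RtoC ((INR n + 1) ^ k) * zterm s n)%C.
Proof.
  unfold zterm. replace (- (s - RtoC (INR k)))%C with (- s + RtoC (INR k))%C by ring.
  rewrite cpow_add_real, <- Rpower_pow; [reflexivity|]. pose proof (pos_INR n); lra.
Qed.

(* Even integers: [(2(n+1))^(-s) = 2^(-s) (n+1)^(-s)]. *)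
Lemma zterm_double s n : zterm s (2 * n + 1) = (cpow 2 (- s) * zterm s n)%C.
Proof.
  unfold zterm. pose proof (pos_INR n).
  replace (INR (2 * n + 1) + 1) with (2 * (INR n + 1)) by (rewrite plus_INR, mult_INR; simpl; ring).
  now apply cpow_mult; lra.
Qed.

Lemma hurwitz_zeta_tail s m : hurwitz_zeta s (INR m + 1) = ctail (zterm s) m.
Proof.
  unfold hurwitz_zeta, ctail, CSeries, zterm.
  f_equal; apply Series_ext; intros n; rewrite plus_INR; f_equal; f_equal; ring.
Qed.

(* [pyramid K = 1^2 + 2^2 + ... + (K+1)^2]. *)
Definition pyramid (K : nat) : R := (INR K + 1) * (INR K + 2) * (2 * INR K + 3) / 6.

(* Weights of the regrouped double sum: since [sum_{k <= m/2} k^2] equals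
   [(m^3 - m)/24] for odd [m] and [(m^3 - m)/24 + (3 m^2 + 3 m)/24] for even [m],
   the term of index [n] receives [cube_weight n / 24], and the term of index
   [2j+1] (where [m = 2j+2]) receives in addition [even_weight j / 24]. *)
Definition cube_weight (n : nat) : R := (INR n + 1) ^ 3 - (INR n + 1).
Definition even_weight (j : nat) : R := 3 * (2 * INR j + 2) ^ 2 + 3 * (2 * INR j + 2).

(* Moves the real-to-complex coercion inwards, so that [field] sees one ring. *)
Ltac pushC := repeat rewrite ?RtoC_plus, ?RtoC_minus, ?RtoC_mult, ?RtoC_pow.

(* Restates a goal [l = r] stated in a Coquelicot structure on [C] as an
   equation in [C] itself, where [ring] and [field] apply. *)
Ltac as_C_eq := match goal with |- ?l = ?r => change (@eq C l r) end.

Lemma sum_n_SC (f : nat -> C) n : sum_n f (S n) = (sum_n f n + f (S n))%C.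
Proof. rewrite sum_Sn. reflexivity. Qed.

Section SummationByParts.

Variables (a T : nat -> C).
Hypothesis T_step : forall j, T j = (a j + T (S j))%C.

(* Two steps at once: the summation by parts advances by two indices. *)
Lemma T_step2 j : T j = (a j + a (S j) + T (S (S j)))%C.
Proof. rewrite (T_step j), (T_step (S j)). ring. Qed.

(* Abel summation for [sum_{k<=K} (k+1)^2 T(2k+1)]: in
   [sum_{k<=K} (k+1)^2 sum_{n >= 2k+1} a n] the terms with [n <= 2K+2] are
   regrouped by [n], the others form the boundary term [pyramid K * T(2K+3)]. *)
Lemma summation_by_parts K :
  sum_n (fun k => (RtoC (INR (k + 1)) ^ 2 * T (2 * k + 1))%C) K =
  (RtoC (pyramid K) * T (2 * K + 3)
   + / 24 * (sum_n (fun n => RtoC (cube_weight n) * a n)%C (2 * K + 2)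
             + sum_n (fun j => RtoC (even_weight j) * a (2 * j + 1)%nat)%C K))%C.
Proof.
  induction K as [|K IH].
  - change (2 * 0 + 2)%nat with 2%nat. rewrite !sum_n_SC, !sum_O.
    change (2 * 0 + 1)%nat with 1%nat. change (2 * 0 + 3)%nat with 3%nat.
    rewrite (T_step2 1).
    unfold pyramid, cube_weight, even_weight. simpl INR. as_C_eq.
    rewrite RtoC_div by lra. pushC. field.
  - rewrite !sum_n_SC, IH.
    replace (2 * S K + 1)%nat with (2 * K + 3)%nat by lia.
    replace (2 * S K + 2)%nat with (S (S (2 * K + 2))) by lia.
    rewrite !sum_n_SC, (T_step2 (2 * K + 3)).
    replace (S (S (2 * K + 2))) with (2 * K + 4)%nat by lia.
    replace (S (2 * K + 2)) with (2 * K + 3)%nat by lia.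
    replace (S (S (2 * K + 3))) with (2 * S K + 3)%nat by lia.
    replace (S (2 * K + 3)) with (2 * K + 4)%nat by lia.
    set (SC := sum_n _ (2 * K + 2)). set (SE := sum_n _ K).
    unfold pyramid, cube_weight, even_weight.
    rewrite !plus_INR, !mult_INR, !S_INR. simpl INR. as_C_eq.
    rewrite !RtoC_div by lra. pushC. field.
Qed.

End SummationByParts.

Lemma pterm_shift p (k : nat) n : pterm (p - INR k) n = (INR n + 1) ^ k * pterm p n.
Proof.
  unfold pterm. pose proof (pos_INR n).
  rewrite <- Rpower_pow by lra. unfold Rpower. rewrite <- exp_plus. f_equal. ring.
Qed.

Lemma pyramid_nonneg K : 0 <= pyramid K.
Proof. unfold pyramid. pose proof (pos_INR K). apply Rdiv_le_0_compat; [|lra]. nra. Qed.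

Lemma pyramid_le_cube K k : pyramid K <= (INR (2 * K + 3 + k) + 1) ^ 3.
Proof.
  unfold pyramid. rewrite !plus_INR, mult_INR. simpl INR.
  pose proof (pos_INR K). pose proof (pos_INR k).
  apply Rle_trans with ((2 * INR K + 4) ^ 3); [|apply pow_incr; lra].
  assert (0 <= (INR K + 1) * (INR K + 2)) by nra.
  assert ((INR K + 1) * (INR K + 2) <= (2 * INR K + 4) ^ 2) by nra.
  assert ((INR K + 1) * (INR K + 2) * (2 * INR K + 3) <= (2 * INR K + 4) ^ 3) by nra.
  unfold Rdiv. nra.
Qed.

Lemma boundary_term_bound s K : 4 < Re s ->
  Cmod (RtoC (pyramid K) * ctail (zterm s) (2 * K + 3))%C <=
  2 * Series (fun k => pterm (Re s - INR 3) (2 * K + 3 + k)).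
Proof.
  intros Hs. set (j := (2 * K + 3)%nat).
  assert (Htail : Cmod (ctail (zterm s) j) <= 2 * Series (fun k => pterm (Re s) (j + k))).
  { rewrite <- (Series_ext (fun k => Cmod (zterm s (j + k)))) by (intros; apply Cmod_zterm).
    apply Cmod_CSeries. apply (ex_series_incr_n (fun n => Cmod (zterm s n))).
    apply zterm_norm_summable. lra. }
  assert (Hweight : pyramid K * Series (fun k => pterm (Re s) (j + k)) <=
                    Series (fun k => pterm (Re s - INR 3) (j + k))).
  { rewrite <- Series_scal_l. apply Series_le.
    - intros k. pose proof (pyramid_nonneg K). pose proof (pterm_pos (Re s) (j + k)).
      split; [nra|]. rewrite pterm_shift.
      apply Rmult_le_compat_r; [lra|apply pyramid_le_cube].
    - apply (ex_series_incr_n (pterm (Re s - INR 3))), pterm_summable. simpl INR. lra. }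
  rewrite Cmod_mult, Cmod_R, Rabs_pos_eq by apply pyramid_nonneg.
  pose proof (pyramid_nonneg K).
  assert (pyramid K * Cmod (ctail (zterm s) j) <=
          pyramid K * (2 * Series (fun k => pterm (Re s) (j + k)))) by now apply Rmult_le_compat_l.
  lra.
Qed.

(* Squeezing against the vanishing tails of [pterm (Re s - 3)]. *)
Lemma boundary_term_vanishes s : 4 < Re s ->
  filterlim (fun K => RtoC (pyramid K) * ctail (zterm s) (2 * K + 3))%C
    eventually (locally (RtoC 0)).
Proof.
  intros Hs. apply (filterlim_norm_zero (V:=C_NormedModule)).
  match goal with |- filterlim ?f _ _ => change (is_lim_seq f 0) end.
  apply (is_lim_seq_le_le (fun _ => 0) _
           (fun K => 2 * Series (fun k => pterm (Re s - INR 3) (2 * K + 3 + k)))).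
  - intros K. split; [apply Cmod_ge_0|now apply boundary_term_bound].
  - apply is_lim_seq_const.
  - replace (Finite 0) with (Rbar_mult 2 0) by (simpl; f_equal; ring).
    apply is_lim_seq_scal_l.
    apply (is_lim_seq_subseq (fun j => Series (fun k => pterm (Re s - INR 3) (j + k)))).
    + apply eventually_subseq. intros n. lia.
    + apply pterm_tail_vanishes. simpl INR. lra.
Qed.

Lemma filterlim_Cplus (f g : nat -> C) a b :
  filterlim f eventually (locally a) -> filterlim g eventually (locally b) ->
  filterlim (fun n => (f n + g n)%C) eventually (locally (a + b)%C).
Proof.
  intros Hf Hg.
  exact (filterlim_comp_2 f g (@plus (NormedModule.AbelianGroup _ C_NormedModule))
           Hf Hg (filterlim_plus (V:=C_NormedModule) a b)).
Qed.

Lemma filterlim_Cmult_l (f : nat -> C) c a :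
  filterlim f eventually (locally a) ->
  filterlim (fun n => (c * f n)%C) eventually (locally (c * a)%C).
Proof.
  intros Hf.
  exact (filterlim_comp_2 (G:=@locally (AbsRing_UniformSpace C_AbsRing) c)
           (fun _ => c) f (@scal C_AbsRing C_NormedModule)
           (@filterlim_const nat (AbsRing_UniformSpace C_AbsRing) eventually _ c)
           Hf (filterlim_scal (V:=C_NormedModule) c a)).
Qed.

Lemma riemann_zeta_shifted s (k : nat) (r : R) : r = INR k -> 1 < Re s - r ->
  is_series (fun n => RtoC ((INR n + 1) ^ k) * zterm s n)%C (riemann_zeta (s - RtoC r)).
Proof.
  intros -> H. apply (is_series_ext (zterm (s - RtoC (INR k)))); [apply zterm_shift|].
  apply riemann_zeta_series. destruct s; simpl in *; lra.
Qed.

Lemma cube_weight_series s : 4 < Re s ->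
  is_series (fun n => RtoC (cube_weight n) * zterm s n)%C
    (riemann_zeta (s - 3) - riemann_zeta (s - 1))%C.
Proof.
  intros Hs.
  apply (is_series_ext (fun n => RtoC ((INR n + 1) ^ 3) * zterm s n
                                 - RtoC ((INR n + 1) ^ 1) * zterm s n)%C).
  { intros n. unfold cube_weight. as_C_eq. rewrite pow_1, RtoC_minus. ring. }
  apply (is_series_minus (V:=C_NormedModule));
    apply riemann_zeta_shifted; simpl; lra.
Qed.

Lemma even_weight_series s : 3 < Re s ->
  is_series (fun j => RtoC (even_weight j) * zterm s (2 * j + 1))%C
    (6 * cpow 2 (1 - s) * riemann_zeta (s - 2) + 3 * cpow 2 (1 - s) * riemann_zeta (s - 1))%C.
Proof.
  intros Hs. rewrite cpow_2_one_minus. set (w := cpow 2 (- s)).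
  replace (6 * (2 * w) * _ + 3 * (2 * w) * _)%C
    with (12 * w * riemann_zeta (s - 2) + 6 * w * riemann_zeta (s - 1))%C by ring.
  apply (is_series_ext (fun j => 12 * w * (RtoC ((INR j + 1) ^ 2) * zterm s j)
                                + 6 * w * (RtoC ((INR j + 1) ^ 1) * zterm s j))%C).
  { intros j. rewrite zterm_double. fold w. unfold even_weight. as_C_eq. pushC. ring. }
  apply (is_series_plus (V:=C_NormedModule));
    apply (is_series_scal (V:=C_NormedModule)), riemann_zeta_shifted; simpl; lra.
Qed.

Lemma hurwitz_zeta_even s k : hurwitz_zeta s (2 * INR (k + 1)) = ctail (zterm s) (2 * k + 1).
Proof.
  rewrite <- hurwitz_zeta_tail. f_equal. rewrite !plus_INR, mult_INR. simpl. ring.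
Qed.

Theorem mainTheorem11 (s : C) (hs : (4 < Re s)%R) :
  is_series
    (fun n : nat => (RtoC (INR (n + 1)) ^ 2 * hurwitz_zeta s (2 * INR (n + 1)))%C)
    (/ 24 * ((3 * cpow 2 (1 - s) - 1) * riemann_zeta (s - 1)
             + 6 * cpow 2 (1 - s) * riemann_zeta (s - 2)
             + riemann_zeta (s - 3)))%C.
Proof.
  set (c := cpow 2 (1 - s)).
  assert (Hstep : forall j, ctail (zterm s) j = (zterm s j + ctail (zterm s) (S j))%C).
  { intros j. apply ctail_step, zterm_summable. lra. }
  assert (Hcube := cube_weight_series s hs).
  assert (Heven := even_weight_series s ltac:(lra)). fold c in Heven.
  (* The limit splits as boundary term + (cube part + even part) / 24. *)
  replace (/ 24 * _)%C with (RtoC 0 + / 24 * ((riemann_zeta (s - 3) - riemann_zeta (s - 1))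
    + (6 * c * riemann_zeta (s - 2) + 3 * c * riemann_zeta (s - 1))))%C by ring.
  unfold is_series.
  eapply filterlim_ext.
  { intros K. symmetry.
    rewrite (sum_n_ext _ (fun k => RtoC (INR (k + 1)) ^ 2 * ctail (zterm s) (2 * k + 1))%C)
      by (intros k; now rewrite hurwitz_zeta_even).
    exact (summation_by_parts _ _ Hstep K). }
  apply filterlim_Cplus; [now apply boundary_term_vanishes|].
  apply filterlim_Cmult_l, filterlim_Cplus; [|exact Heven].
  (* The cube part is a subsequence of the partial sums of [Hcube]. *)
  apply (filterlim_comp _ _ _ (fun K => 2 * K + 2)%nat (sum_n _) eventually eventually);
    [|exact Hcube].
  apply eventually_subseq. intros n. lia.
Qed.
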